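(* For every $m\in\mathbb{Q}$ with $m\notin\{0,1,-1\}$, consider the tetrahedron in $\mathbb{R}^3$ with vertices \begin{align*} P_1&=(0,0,0),\qquad P_2=\big(10(m^4-1)(m^4+3m^2+1),\,0,\,0\big),\\ P_3&=\Big(\tfrac{2(m^2-1)(m^2+4)(3m^2+2)^2}{5},\ \tfrac{(m^2+4)(2m^2+3)(3m^2+2)(4m^2+1)}{5},\ 0\Big),\\ P_4&=\Big(\tfrac{2(m^2-1)(2m^2+3)^2(4m^2+1)}{5},\ -\tfrac{(2m^2+3)(2m^2-5m-2)(2m^2+5m-2)(3m^2+2)}{5},\ 4(m^2-1)m(2m^2+3)(3m^2+2)\Big). \end{align*} Then its four faces are congruent triangles (opposite edges have equal length), and all six edge lengths, all four face areas, and the volume of this tetrahedron are rational numbers.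
   Context: No further context is needed. *)

From Stdlib Require Import Reals QArith Qreals.
Open Scope R_scope.

Definition pt := (R * R * R)%type.
Definition mkpt (x y z : R) : pt := (x, y, z).
Definition px (p : pt) : R := fst (fst p).
Definition py (p : pt) : R := snd (fst p).
Definition pz (p : pt) : R := snd p.

Definition vsub (p q : pt) : pt := mkpt (px p - px q) (py p - py q) (pz p - pz q).
Definition dot (u v : pt) : R := px u * px v + py u * py v + pz u * pz v.
Definition cross (u v : pt) : pt :=
  mkpt (py u * pz v - pz u * py v)
       (pz u * px v - px u * pz v)
       (px u * py v - py u * px v).
Definition det3 (u v w : pt) : R := dot u (cross v w).

Definition edge_len (p q : pt) : R := sqrt (dot (vsub p q) (vsub p q)).
Definition tri_area (p q r : pt) : R :=
  sqrt (dot (cross (vsub q p) (vsub r p)) (cross (vsub q p) (vsub r p))) / 2.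
Definition tet_volume (p1 p2 p3 p4 : pt) : R :=
  Rabs (det3 (vsub p2 p1) (vsub p3 p1) (vsub p4 p1)) / 6.

Definition is_rational (x : R) : Prop := exists q : Q, x = Q2R q.

Definition P1 (m : R) : pt := mkpt 0 0 0.
Definition P2 (m : R) : pt :=
  mkpt (10 * (m^4 - 1) * (m^4 + 3*m^2 + 1)) 0 0.
Definition P3 (m : R) : pt :=
  mkpt (2 * (m^2 - 1) * (m^2 + 4) * (3*m^2 + 2)^2 / 5)
       ((m^2 + 4) * (2*m^2 + 3) * (3*m^2 + 2) * (4*m^2 + 1) / 5)
       0.
Definition P4 (m : R) : pt :=
  mkpt (2 * (m^2 - 1) * (2*m^2 + 3)^2 * (4*m^2 + 1) / 5)
       (- ((2*m^2 + 3) * (2*m^2 - 5*m - 2) * (2*m^2 + 5*m - 2) * (3*m^2 + 2)) / 5)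
       (4 * (m^2 - 1) * m * (2*m^2 + 3) * (3*m^2 + 2)).

(* Opposite edges of the tetrahedron have the same squared length, and each
   squared edge length and each squared face cross product |(q-p) x (r-p)|^2 is
   the square of a polynomial in m with rational coefficients; so for rational
   m every edge length and face area is the absolute value of a rational.
   Since P2 lies on the x-axis and P3 in the xy-plane, the volume determinant is
   the product of the diagonal coordinates, which vanishes only at m = 0, 1, -1. *)
From Stdlib Require Import Reals QArith Qreals Lra.
Open Scope R_scope.

Lemma is_rational_Q2R (q : Q) : is_rational (Q2R q).
Proof. exists q; reflexivity. Qed.

Lemma is_rational_IZR (z : Z) : is_rational (IZR z).
Proof. exists (inject_Z z). unfold Q2R; simpl. rewrite Rinv_1. ring. Qed.

Lemma is_rational_plus (x y : R) : is_rational x -> is_rational y -> is_rational (x + y).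
Proof. intros [a ->] [b ->]. exists (a + b)%Q. now rewrite Q2R_plus. Qed.

Lemma is_rational_mult (x y : R) : is_rational x -> is_rational y -> is_rational (x * y).
Proof. intros [a ->] [b ->]. exists (a * b)%Q. now rewrite Q2R_mult. Qed.

Lemma is_rational_opp (x : R) : is_rational x -> is_rational (- x).
Proof. intros [a ->]. exists (- a)%Q. now rewrite Q2R_opp. Qed.

Lemma is_rational_minus (x y : R) : is_rational x -> is_rational y -> is_rational (x - y).
Proof. intros Hx Hy. apply is_rational_plus; [exact Hx | now apply is_rational_opp]. Qed.

Lemma is_rational_pow (x : R) (n : nat) : is_rational x -> is_rational (x ^ n).
Proof.
  intros Hx; induction n as [|n IH]; simpl.
  - apply (is_rational_IZR 1).
  - now apply is_rational_mult.
Qed.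

Lemma is_rational_div_pos (x : R) (p : positive) :
  is_rational x -> is_rational (x / IZR (Zpos p)).
Proof.
  intros [a ->]. exists (a * (1 # p))%Q.
  rewrite Q2R_mult. unfold Rdiv, Q2R; simpl. ring.
Qed.

Lemma is_rational_Rabs (x : R) : is_rational x -> is_rational (Rabs x).
Proof.
  intros Hx. unfold Rabs. destruct (Rcase_abs x).
  - now apply is_rational_opp.
  - exact Hx.
Qed.

Ltac solve_rational :=
  repeat first
    [ assumption | apply is_rational_IZR | apply is_rational_Rabs
    | apply is_rational_div_pos | apply is_rational_pow | apply is_rational_opp
    | apply is_rational_minus | apply is_rational_plus | apply is_rational_mult ].

Lemma edge_len_of_square (p q : pt) (e : R) :
  dot (vsub p q) (vsub p q) = e ^ 2 -> edge_len p q = Rabs e.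
Proof.
  intros He. unfold edge_len. rewrite He, <- Rsqr_pow2. apply sqrt_Rsqr_abs.
Qed.

Lemma tri_area_of_square (p q r : pt) (a : R) :
  dot (cross (vsub q p) (vsub r p)) (cross (vsub q p) (vsub r p)) = (2 * a) ^ 2 ->
  tri_area p q r = Rabs a.
Proof.
  intros Ha. unfold tri_area. rewrite Ha, <- Rsqr_pow2, sqrt_Rsqr_abs, Rabs_mult.
  rewrite (Rabs_right 2) by lra. field.
Qed.

Lemma tet_volume_of_det (p1 p2 p3 p4 : pt) (v : R) :
  det3 (vsub p2 p1) (vsub p3 p1) (vsub p4 p1) = 6 * v ->
  tet_volume p1 p2 p3 p4 = Rabs v.
Proof.
  intros Hv. unfold tet_volume. rewrite Hv, Rabs_mult.
  rewrite (Rabs_right 6) by lra. field.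
Qed.

Section Tetrahedron.

Variable m : R.

Definition edge_a : R := 10 * (m^4 - 1) * (m^4 + 3*m^2 + 1).
Definition edge_b : R := (m^2 + 4) * (3*m^2 + 2) * (2*m^4 + 2*m^2 + 1).
Definition edge_c : R := (2*m^2 + 3) * (4*m^2 + 1) * (m^4 + 2*m^2 + 2).

Definition face_area : R :=
  (m^4 - 1) * (m^2 + 4) * (2*m^2 + 3) * (3*m^2 + 2) * (4*m^2 + 1) * (m^4 + 3*m^2 + 1).

Definition signed_volume : R :=
  4 / 3 * m * (m^2 - 1) * (m^4 - 1) * (m^4 + 3*m^2 + 1)
  * (m^2 + 4) * (2*m^2 + 3)^2 * (3*m^2 + 2)^2 * (4*m^2 + 1).

Ltac expand_vertices :=
  unfold P1, P2, P3, P4, det3, vsub, dot, cross, px, py, pz, mkpt; simpl.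

Ltac edge_by_identity e :=
  apply edge_len_of_square; unfold e; expand_vertices; field.

Ltac area_by_identity :=
  apply tri_area_of_square; unfold face_area; expand_vertices; field.

Lemma edge_len_P1P2 : edge_len (P1 m) (P2 m) = Rabs edge_a.
Proof. edge_by_identity edge_a. Qed.
Lemma edge_len_P3P4 : edge_len (P3 m) (P4 m) = Rabs edge_a.
Proof. edge_by_identity edge_a. Qed.
Lemma edge_len_P1P3 : edge_len (P1 m) (P3 m) = Rabs edge_b.
Proof. edge_by_identity edge_b. Qed.
Lemma edge_len_P2P4 : edge_len (P2 m) (P4 m) = Rabs edge_b.
Proof. edge_by_identity edge_b. Qed.
Lemma edge_len_P1P4 : edge_len (P1 m) (P4 m) = Rabs edge_c.
Proof. edge_by_identity edge_c. Qed.
Lemma edge_len_P2P3 : edge_len (P2 m) (P3 m) = Rabs edge_c.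
Proof. edge_by_identity edge_c. Qed.

Lemma tri_area_P1P2P3 : tri_area (P1 m) (P2 m) (P3 m) = Rabs face_area.
Proof. area_by_identity. Qed.
Lemma tri_area_P1P2P4 : tri_area (P1 m) (P2 m) (P4 m) = Rabs face_area.
Proof. area_by_identity. Qed.
Lemma tri_area_P1P3P4 : tri_area (P1 m) (P3 m) (P4 m) = Rabs face_area.
Proof. area_by_identity. Qed.
Lemma tri_area_P2P3P4 : tri_area (P2 m) (P3 m) (P4 m) = Rabs face_area.
Proof. area_by_identity. Qed.

Lemma tet_volume_P : tet_volume (P1 m) (P2 m) (P3 m) (P4 m) = Rabs signed_volume.
Proof. apply tet_volume_of_det. unfold signed_volume. expand_vertices. field. Qed.

Lemma signed_volume_neq0 : m <> 0 -> m <> 1 -> m <> -1 -> signed_volume <> 0.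
Proof.
  intros Hm0 Hm1 Hm_1.
  assert (Hsq : m^2 - 1 <> 0).
  { replace (m^2 - 1) with ((m - 1) * (m + 1)) by ring.
    apply Rmult_integral_contrapositive_currified; lra. }
  assert (Hm2 : 0 <= m^2) by nra.
  assert (Hm4 : 0 <= m^4) by (replace (m^4) with ((m^2)^2) by ring; nra).
  assert (Hquart : m^4 - 1 <> 0).
  { replace (m^4 - 1) with ((m^2 - 1) * (m^2 + 1)) by ring.
    apply Rmult_integral_contrapositive_currified; [exact Hsq | lra]. }
  unfold signed_volume.
  repeat apply Rmult_integral_contrapositive_currified;
    try assumption; try apply pow_nonzero; lra.
Qed.

End Tetrahedron.

Theorem mainTheorem9 (q : Q) :
  let m := Q2R q in
  m <> 0 -> m <> 1 -> m <> -1 ->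
  let A := P1 m in let B := P2 m in let C := P3 m in let D := P4 m in
  0 < tet_volume A B C D /\
  edge_len A B = edge_len C D /\ edge_len A C = edge_len B D /\ edge_len A D = edge_len B C /\
  is_rational (edge_len A B) /\ is_rational (edge_len A C) /\ is_rational (edge_len A D) /\
  is_rational (edge_len B C) /\ is_rational (edge_len B D) /\ is_rational (edge_len C D) /\
  is_rational (tri_area A B C) /\ is_rational (tri_area A B D) /\
  is_rational (tri_area A C D) /\ is_rational (tri_area B C D) /\
  is_rational (tet_volume A B C D).
Proof.
  intros m Hm0 Hm1 Hm_1 A B C D.
  assert (Hm : is_rational m) by apply is_rational_Q2R.
  unfold A, B, C, D.
  rewrite tet_volume_P, edge_len_P1P2, edge_len_P3P4, edge_len_P1P3, edge_len_P2P4,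
    edge_len_P1P4, edge_len_P2P3, tri_area_P1P2P3, tri_area_P1P2P4, tri_area_P1P3P4,
    tri_area_P2P3P4.
  split.
  - apply Rabs_pos_lt, signed_volume_neq0; assumption.
  - repeat split; try reflexivity;
      unfold edge_a, edge_b, edge_c, face_area, signed_volume; solve_rational.
Qed.
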